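(* Let $k\ge 4$ be an integer, let $t$ be a positive integer divisible by $\operatorname{lcm}(2,3,\ldots,2k-1)$, and let $n$ be an integer with $k^2-k \le n \le 4k^2-10k+5$. Suppose $S$ is a $k$-bounded zero-sum sequence of length $|S|=t+n$ that is $t$-avoiding, and let $\alpha>0$, $\beta>0$ be integers with $v_\alpha(S)\ge \frac{k}{k+1}n$ and $v_{-\beta}(S)\ge\frac{k}{k+1}n$. Let $g=\gcd(\alpha,\beta)$ and let $X$ be the sequence consisting of $\beta/g$ copies of $\alpha$ and $\alpha/g$ copies of $-\beta$. Then for every $N\in\mathbb N$, the sequence $S'$ obtained by adjoining $N$ copies of $X$ to $S$ (i.e. $S\cdot X^{[N]}$) has no zero-sum subsequence of length exactly $n$.
   Context: A sequence is a finite multiset of integers; $|S|$ is its length counted with multiplicity, $v_a(S)$ is the multiplicity of $a$ in $S$, and a subsequence is a sub-multiset. $S$ is zero-sum if the sum of its terms is $0$, and $k$-bounded if all terms lie in $[-k,k]$. A zero-sum sequence is $t$-avoiding if it has no zero-sum subsequence of length exactly $t$. $S\cdot X^{[N]}$ denotes the concatenation (multiset union) of $S$ with $N$ copies of $X$. *)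

From mathcomp Require Import all_boot all_order all_algebra.
Set Implicit Arguments. Unset Strict Implicit. Unset Printing Implicit Defensive.
Import Order.TTheory GRing.Theory Num.Theory.
Local Open Scope ring_scope.

(* A sequence (finite multiset of integers) is represented by a list
   [S : seq int]; order is irrelevant for all notions below.
   A subsequence (sub-multiset) of S is [mask m S] for a bitmask m. *)

Definition seqsum (S : seq int) : int := \sum_(x <- S) x.

Definition zero_sum (S : seq int) : Prop := seqsum S = 0.

Definition kbounded (k : nat) (S : seq int) : Prop :=
  forall x, x \in S -> - (k%:Z) <= x <= k%:Z.

Definition has_zs_sub_len (t : nat) (S : seq int) : Prop :=
  exists m : bitseq, size (mask m S) = t /\ zero_sum (mask m S).

Definition t_avoiding (t : nat) (S : seq int) : Prop :=
  zero_sum S /\ ~ has_zs_sub_len t S.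

Definition mult (a : int) (S : seq int) : nat := count_mem a S.

Definition lcm_upto (m : nat) : nat := \big[lcmn/1%N]_(2 <= i < m.+1) i.

Definition adjoin (S X : seq int) (N : nat) : seq int :=
  S ++ flatten (nseq N X).

From mathcomp Require Import all_boot all_order all_algebra.
From mathcomp Require Import zify.
Import Order.TTheory GRing.Theory Num.Theory.
Local Open Scope ring_scope.

(* A zero-sum subsequence T of length n of S.X^[N] is k-bounded, so neither
   alpha nor -beta can fill more than a k/(k+1) fraction of it; by the
   multiplicity hypotheses T is then a sub-multiset of S.  Its complement in S
   is a zero-sum subsequence of length t, contradicting t-avoidance. *)

Lemma perm_cat_mask_compl (T : eqType) (s1 s2 : seq T) :
  (forall x, (count_mem x s1 <= count_mem x s2)%N) ->
  exists m : bitseq, perm_eq s2 (s1 ++ mask m s2).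
Proof.
move=> /count_subseqP[s sub_s_s2 perm_s1_s].
have [s3 perm_s2] := perm_to_subseq sub_s_s2.
have /count_maskP[m _ perm_s3] : forall x, (count_mem x s3 <= count_mem x s2)%N.
  by move=> x; rewrite (permP perm_s2) count_cat leq_addl.
exists m; apply: perm_trans perm_s2 _.
by rewrite perm_cat // perm_sym.
Qed.

Lemma has_zs_sub_len_compl (t : nat) (S T : seq int) :
  (forall x, (count_mem x T <= count_mem x S)%N) ->
  zero_sum S -> zero_sum T -> size S = (t + size T)%N ->
  has_zs_sub_len t S.
Proof.
move=> /perm_cat_mask_compl[m perm_S] zsS zsT sizeS; exists m; split.
  by apply/eqP; rewrite -(eqn_add2r (size T)) addnC -size_cat -(perm_size perm_S) sizeS.
move: zsS; rewrite /zero_sum /seqsum (perm_big _ perm_S) big_cat /=.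
by rewrite -/(seqsum T) zsT add0r.
Qed.

Lemma count_mem_mulD_le (k a : int) (T : seq int) :
  {in T, forall x, - k <= x} -> - k <= a ->
  (count_mem a T)%:Z * (a + k) <= seqsum T + k * (size T)%:Z.
Proof.
move=> lbT lba; elim: T lbT => [|y T IH] lbT.
  by rewrite /seqsum big_nil /= !mul0r mulr0 addr0.
rewrite /seqsum big_cons -/(seqsum T) /=.
have lby : - k <= y by apply: lbT; rewrite inE eqxx.
have := IH (fun x xT => lbT x (mem_behead (s := y :: T) xT)).
by case: eqP => [->|_] /=; lia.
Qed.

Lemma zero_sum_count_mem_le (k : nat) (a : int) (T : seq int) :
  kbounded k T -> zero_sum T ->
  (count_mem a T)%:Z * (`|a| + k%:Z) <= k%:Z * (size T)%:Z.
Proof.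
have nonneg_case b U : kbounded k U -> zero_sum U -> 0 <= b ->
    (count_mem b U)%:Z * (`|b| + k%:Z) <= k%:Z * (size U)%:Z.
  move=> bU zsU b_ge0; rewrite ger0_norm //.
  have := @count_mem_mulD_le k b U; rewrite zsU add0r; apply; last by lia.
  by move=> x /bU /andP[].
move=> bT zsT; have [a_ge0|a_lt0] := lerP 0 a; first exact: nonneg_case.
have := nonneg_case (- a) (map -%R T).
rewrite normrN size_map count_map.
rewrite (@eq_count _ _ (pred1 a)) => [|x]; last by rewrite /= eqr_opp.
apply; last by lia.
- by move=> _ /mapP[x /bT /andP[lbx ubx] ->]; apply/andP; split; lia.
- by rewrite /zero_sum /seqsum big_map sumrN -/(seqsum T) zsT oppr0.
Qed.

Lemma zero_sum_count_mem_leq (k : nat) (a : int) (T : seq int) :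
  a != 0 -> kbounded k T -> zero_sum T ->
  ((k + 1) * count_mem a T <= k * size T)%N.
Proof.
move=> a_neq0 bT zsT; have := @zero_sum_count_mem_le k a T bT zsT.
have : 0 < `|a| by rewrite normr_gt0.
nia.
Qed.

Lemma count_adjoin (P : pred int) (S X : seq int) (N : nat) :
  count P (adjoin S X N) = (count P S + N * count P X)%N.
Proof. by rewrite /adjoin count_cat count_flatten map_nseq sumn_nseq mulnC. Qed.

Lemma kbounded_adjoin (k : nat) (S X : seq int) (N : nat) :
  kbounded k S -> kbounded k X -> kbounded k (adjoin S X N).
Proof.
move=> bS bX x; rewrite mem_cat => /orP[/bS //|/flattenP[s]].
by rewrite mem_nseq => /andP[_ /eqP ->] /bX.
Qed.

Theorem lemma2p3 (k t n : nat) (S : seq int) (alpha beta : nat) :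
  (4 <= k)%N ->
  (0 < t)%N ->
  (lcm_upto (2 * k - 1) %| t)%N ->
  (k * k - k <= n)%N ->
  (n + 10 * k <= 4 * k * k + 5)%N ->
  kbounded k S ->
  size S = (t + n)%N ->
  t_avoiding t S ->
  (0 < alpha)%N -> (0 < beta)%N ->
  (k * n <= (k + 1) * mult (alpha%:Z) S)%N ->
  (k * n <= (k + 1) * mult (- (beta%:Z)) S)%N ->
  forall N : nat,
    let g := gcdn alpha beta in
    let X := nseq (beta %/ g) (alpha%:Z) ++ nseq (alpha %/ g) (- (beta%:Z)) in
    ~ has_zs_sub_len n (adjoin S X N).
Proof.
move=> k_ge4 _ _ n_ge _ bS sizeS [zsS noT] alpha_gt0 beta_gt0 mult_alpha mult_beta
  N g X [m [sizeT zsT]].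
set T := mask m (adjoin S X N) in sizeT zsT.
have in_S a : (k * n <= (k + 1) * mult a S)%N -> a \in S.
  by rewrite -has_pred1 has_count /mult; nia.
have bX : kbounded k X.
  by move=> x; rewrite mem_cat !mem_nseq => /orP[]/andP[_ /eqP ->]; apply/bS/in_S.
have bT : kbounded k T by move=> x /mem_mask /(kbounded_adjoin _ _ _ N bS bX).
have heavy a : a != 0 -> (k * n <= (k + 1) * mult a S)%N ->
    (count_mem a T <= count_mem a S)%N.
  move=> a_neq0 mult_a; rewrite -(@leq_pmul2l (k + 1)); last by rewrite addn1.
  by apply: leq_trans mult_a; rewrite -sizeT zero_sum_count_mem_leq.
have T_sub_S x : (count_mem x T <= count_mem x S)%N.
  have [->|x_neq_alpha] := eqVneq x alpha%:Z; first by apply: heavy mult_alpha; lia.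
  have [->|x_neq_beta] := eqVneq x (- beta%:Z); first by apply: heavy mult_beta; lia.
  have x_notin_X : x \notin X.
    by rewrite mem_cat !mem_nseq (negbTE x_neq_alpha) (negbTE x_neq_beta) !andbF.
  apply: leq_trans (leq_count_mask _ _ _) _.
  by rewrite count_adjoin (count_memPn x_notin_X) muln0 addn0.
by apply: noT; apply: has_zs_sub_len_compl T_sub_S zsS zsT _; rewrite sizeS sizeT.
Qed.
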